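(* Assume $n\ge 2$ and $\chi\neq\{0\}$. The reshuffling property and the source-anonymous contributions property are independent: there exists a risk-sharing rule on $\chi^n$ that satisfies the reshuffling property but does not have source-anonymous contributions, and there exists a risk-sharing rule on $\chi^n$ that has source-anonymous contributions but does not satisfy the reshuffling property.
   Context: Fix a probability space $(\Omega,\mathcal{F},\mathbb{P})$ and an integer $n$. Let $\chi$ be a convex cone of non-negative random variables on this space (closed under addition and under multiplication by positive scalars) with $0\in\chi$. Equalities between random variables are understood almost surely. A pool is a vector $\boldsymbol{X}=(X_1,\ldots,X_n)\in\chi^n$, with aggregate loss $S_{\boldsymbol{X}}=\sum_{i=1}^n X_i$. A risk-sharing (RS) rule is a mapping $\boldsymbol{C}$ assigning to every pool $\boldsymbol{X}\in\chi^n$ a vector $\boldsymbol{C}[\boldsymbol{X}]=(C_1[\boldsymbol{X}],\ldots,C_n[\boldsymbol{X}])$ of real-valued random variables satisfying $\sum_{i=1}^n C_i[\boldsymbol{X}]=S_{\boldsymbol{X}}$. For a permutation $\pi$ of $\{1,\ldots,n\}$, $\boldsymbol{X}^\pi=(X_{\pi(1)},\ldots,X_{\pi(n)})$. Reshuffling property: $C_i[\boldsymbol{X}^\pi]=C_{\pi(i)}[\boldsymbol{X}]$ for all pools $\boldsymbol{X}$, permutations $\pi$ and indices $i$. Source-anonymous contributions: $C_i[\boldsymbol{X}^\pi]=C_i[\boldsymbol{X}]$ for all pools $\boldsymbol{X}$, permutations $\pi$ and indices $i$. *)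

From HB Require Import structures.
From mathcomp Require Import all_boot all_order all_algebra.
From mathcomp Require Import fingroup perm.
From mathcomp Require Import all_classical all_reals all_analysis.
Set Implicit Arguments. Unset Strict Implicit. Unset Printing Implicit Defensive.
Import Order.TTheory GRing.Theory Num.Theory.
Local Open Scope classical_set_scope.
Local Open Scope ring_scope.

Section RiskSharing.
Context {d : measure_display} {T : measurableType d} {R : realType}.
Variable P : probability T R.

Definition aeq (f g : T -> R) : Prop := {ae P, forall w, f w = g w}.

Definition is_cone (chi : set (T -> R)) : Prop :=
  [/\ (forall X, chi X -> measurable_fun setT X),
      (forall X, chi X -> {ae P, forall w, 0 <= X w}),
      chi (fun _ => 0),
      (forall X Y, chi X -> chi Y -> chi (fun w => X w + Y w)) &
      (forall (c : R) X, 0 < c -> chi X -> chi (fun w => c * X w))].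

Definition nontrivial (chi : set (T -> R)) : Prop :=
  exists X, chi X /\ ~ aeq X (fun _ => 0).

Definition pool (n : nat) := 'I_n -> T -> R.
Definition in_pool (chi : set (T -> R)) n (X : pool n) : Prop := forall i, chi (X i).

Definition permute n (X : pool n) (pi : 'S_n) : pool n := fun i => X (pi i).

Definition aggregate n (X : pool n) : T -> R := fun w => \sum_(i < n) X i w.

Definition RS_rule (chi : set (T -> R)) n (C : pool n -> pool n) : Prop :=
  forall X, in_pool chi X ->
    (forall i, measurable_fun setT (C X i)) /\ aeq (aggregate (C X)) (aggregate X).

Definition reshuffling (chi : set (T -> R)) n (C : pool n -> pool n) : Prop :=
  forall X (pi : 'S_n) i, in_pool chi X -> aeq (C (permute X pi) i) (C X (pi i)).

Definition source_anonymous (chi : set (T -> R)) n (C : pool n -> pool n) : Prop :=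
  forall X (pi : 'S_n) i, in_pool chi X -> aeq (C (permute X pi) i) (C X i).

End RiskSharing.

From HB Require Import structures.
From mathcomp Require Import all_boot all_order all_algebra.
From mathcomp Require Import fingroup perm.
From mathcomp Require Import all_classical all_reals all_analysis.
Set Implicit Arguments. Unset Strict Implicit. Unset Printing Implicit Defensive.
Import Order.TTheory GRing.Theory Num.Theory.
Local Open Scope ring_scope.

(* The identity rule reshuffles, and the rule charging the whole aggregate
   loss to one participant i is source-anonymous because the aggregate is
   permutation invariant.  Both fail the other property on the pool carrying
   a non-null loss X0 at position i and 0 elsewhere, permuted by the
   transposition of i with some j <> i: the identity then gives i the loss 0
   instead of X0, and the charging rule gives j the loss 0 instead of X0. *)

Section Independence.
Context {d : measure_display} {T : measurableType d} {R : realType}.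
Variable P : probability T R.

Lemma aeq_sym (f g : T -> R) : aeq P f g -> aeq P g f.
Proof. by apply: filterS => w ->. Qed.

Lemma aeqW (f g : T -> R) : f =1 g -> aeq P f g.
Proof. by move=> fg; apply: aeW. Qed.

Variables (chi : set (T -> R)) (n : nat).
Local Notation pool_n := (@pool d T R n).

Definition single_pool (i : 'I_n) (X0 : T -> R) : pool_n :=
  fun k => if k == i then X0 else (fun _ => 0).

Lemma single_pool_in_pool i X0 :
  chi (fun _ => 0) -> chi X0 -> in_pool chi (single_pool i X0).
Proof. by move=> chi0 chiX0 k; rewrite /single_pool; case: ifP. Qed.

Lemma aggregate_single_pool i X0 : aggregate (single_pool i X0) =1 X0.
Proof.
move=> w; rewrite /aggregate (bigD1 i) //= /single_pool eqxx big1 ?addr0 //.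
by move=> k /negbTE ->.
Qed.

Lemma aggregate_permute (X : pool_n) (pi : 'S_n) :
  aggregate (permute X pi) =1 aggregate X.
Proof.
by move=> w; rewrite /aggregate /permute [RHS](reindex_inj (@perm_inj _ pi)).
Qed.

Definition charge_to (i : 'I_n) (X : pool_n) : pool_n :=
  single_pool i (aggregate X).

Hypothesis chi_measurable : forall X, chi X -> measurable_fun setT X.

Lemma RS_rule_id : RS_rule P chi (@id pool_n).
Proof. by move=> X chiX; split=> [i|]; [exact: chi_measurable | exact: aeqW]. Qed.

Lemma reshuffling_id : reshuffling P chi (@id pool_n).
Proof. by move=> X pi i _; exact: aeqW. Qed.

Lemma RS_rule_charge_to i : RS_rule P chi (charge_to i).
Proof.
move=> X chiX; split; last exact/aeqW/aggregate_single_pool.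
move=> k; rewrite /charge_to /single_pool; case: ifP => _; last exact: measurable_cst.
by apply: measurable_sum => j; exact: chi_measurable.
Qed.

Lemma source_anonymous_charge_to i : source_anonymous P chi (charge_to i).
Proof.
move=> X pi k _; apply: aeqW => w; rewrite /charge_to /single_pool.
by case: ifP => // _; exact: aggregate_permute.
Qed.

Variables (i j : 'I_n) (X0 : T -> R).
Hypotheses (neq_ij : i != j) (chi0 : chi (fun _ => 0)) (chiX0 : chi X0).
Hypothesis X0_nonnull : ~ aeq P X0 (fun _ => 0).

Lemma not_source_anonymous_id : ~ source_anonymous P chi (@id pool_n).
Proof.
move=> anon; apply/X0_nonnull/aeq_sym.
have := anon _ (tperm i j) i (single_pool_in_pool i chi0 chiX0).
by rewrite /= /permute tpermL /single_pool eqxx eq_sym (negbTE neq_ij).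
Qed.

Lemma not_reshuffling_charge_to : ~ reshuffling P chi (charge_to i).
Proof.
move=> resh; apply/X0_nonnull/aeq_sym.
have := resh _ (tperm i j) j (single_pool_in_pool i chi0 chiX0).
rewrite tpermR /charge_to /single_pool eqxx eq_sym (negbTE neq_ij).
by apply: filterS => w ->; rewrite aggregate_single_pool.
Qed.

End Independence.

Theorem proposition2 (d : measure_display) (T : measurableType d) (R : realType)
  (P : probability T R) (chi : set (T -> R)) (n : nat) :
  (2 <= n)%N -> is_cone P chi -> nontrivial P chi ->
  (exists C : pool n -> pool n,
      RS_rule P chi C /\ reshuffling P chi C /\ ~ source_anonymous P chi C) /\
  (exists C : pool n -> pool n,
      RS_rule P chi C /\ source_anonymous P chi C /\ ~ reshuffling P chi C).
Proof.
case: n => [|[|n]] // _ [chi_meas _ chi0 _ _] [X0 [chiX0 X0_nonnull]].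
have neq01 : (ord0 : 'I_n.+2) != ord_max by [].
split.
- exists id; split; first exact: RS_rule_id.
  split; first exact: reshuffling_id.
  exact: (not_source_anonymous_id neq01 chi0 chiX0).
- exists (charge_to ord0); split; first exact: RS_rule_charge_to.
  split; first exact: source_anonymous_charge_to.
  exact: (not_reshuffling_charge_to neq01 chi0 chiX0).
Qed.
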